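(* Let $h,p,K>0$, $H(x)=h\max(x,0)+p\max(-x,0)$, and $\delta(u)=1$ if $u>0$, $\delta(u)=0$ if $u=0$. Fix an initial inventory $x_0\in\mathbb{R}$ and an infinite demand sample path $\omega=(d_1,d_2,\dots)$ of nonnegative demands. For $N\ge1$ and $u_1\ge0$ let \[J_N(u_1,\omega)=H(x_1)+K\delta(u_1)+\min_{u_2,\dots,u_N\ge 0}\sum_{i=2}^N\big(H(x_i)+K\delta(u_i)\big),\quad x_i=x_{i-1}-d_i+u_i,\ i=1,\dots,N,\] and let $J(u_1,\omega)=\lim_{N\to\infty}\frac1N J_N(u_1,\omega)$, assumed to exist (finite) for every $u_1>0$. Then $J(u_1,\omega)$ is convex in $u_1$ on $u_1>0$.
   Context: Periodic-review inventory model with fixed setup cost $K$, holding cost rate $h$, backlog penalty rate $p$ and full backlogging; $J(u_1,\omega)$ is the infinite-horizon average cost along sample path $\omega$ when the first-period order is $u_1$ and later orders are chosen optimally. *)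

From Stdlib Require Import Reals.
From Coquelicot Require Import Coquelicot.
Open Scope R_scope.

Definition Hcost (h p x : R) : R := h * Rmax x 0 + p * Rmax (- x) 0.

(* setup indicator: delta(u) = 1 if u > 0, 0 otherwise (used only for u >= 0) *)
Definition delta (u : R) : R := if Rlt_dec 0 u then 1 else 0.

(* inventory levels: x_0 = x0, x_i = x_{i-1} - d_i + u_i.
   Demands d and orders u are indexed from 1 (index 0 unused). *)
Fixpoint inv (x0 : R) (d u : nat -> R) (i : nat) : R :=
  match i with
  | O => x0
  | S j => inv x0 d u j - d (S j) + u (S j)
  end.

Fixpoint total_cost (h p K x0 : R) (d u : nat -> R) (N : nat) : R :=
  match N with
  | O => 0
  | S n => total_cost h p K x0 d u n + (Hcost h p (inv x0 d u (S n)) + K * delta (u (S n)))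
  end.

(* J_N(u1, omega): first order fixed to u1, later orders u_2..u_N >= 0 chosen
   optimally (the minimum, taken as the infimum over all admissible choices). *)
Definition J_N (h p K x0 : R) (d : nat -> R) (N : nat) (u1 : R) : R :=
  real (Glb_Rbar (fun c : R => exists u : nat -> R,
          u 1%nat = u1 /\
          (forall i : nat, (2 <= i <= N)%nat -> 0 <= u i) /\
          c = total_cost h p K x0 d u N)).

(* Write S_n = d_1 + ... + d_n, a nondecreasing sequence.
   If S_n converges to a finite D, every admissible policy keeps x_n >= x_0 + u_1 - D,
   while ordering once more at period 2 so that x_0 + u_1 + u_2 = max (x_0 + u_1, D) and
   never again costs asymptotically h max (x_0 + u_1 - D, 0) per period; so
   J(u_1) = h max (x_0 + u_1 - D, 0), which is convex.
   If S_n is unbounded, J is constant on u_1 > 0: a smaller first order can be topped up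
   at period 2 for a bounded extra cost, and a larger first order b can follow the policy
   whose inventory is the pointwise maximum of the two trajectories, which costs at most
   h (b - a) more per period, and nothing more once S_n exceeds x_0 + b.  Bounded
   differences of J_N vanish after division by N. *)

From Stdlib Require Import Reals Lra Lia.
From Coquelicot Require Import Coquelicot.
Open Scope R_scope.

Lemma is_lim_seq_inv_INR_S : is_lim_seq (fun n => / INR (S n)) 0.
Proof.
  apply (is_lim_seq_incr_1 (fun n => / INR n)).
  replace (Finite 0) with (Rbar_inv p_infty) by reflexivity.
  apply is_lim_seq_inv; [apply is_lim_seq_INR | discriminate].
Qed.

Lemma INR_S_pos n : 0 < INR (S n).
Proof. apply lt_0_INR; lia. Qed.

Lemma is_lim_seq_avg_le (x y : nat -> R) (lx ly A Y : R) :
  is_lim_seq (fun N => x N / INR (S N)) lx ->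
  is_lim_seq (fun N => y N / INR (S N)) ly ->
  (forall N, x N <= y N + A + INR (S N) * Y) -> lx <= ly + Y.
Proof.
  intros Hx Hy Hxy.
  assert (Hbound : is_lim_seq (fun N => y N / INR (S N) + A * / INR (S N) + Y)
                     (ly + A * 0 + Y)).
  { apply is_lim_seq_plus'; [apply is_lim_seq_plus' | apply is_lim_seq_const]; auto.
    exact (is_lim_seq_scal_l _ A _ is_lim_seq_inv_INR_S). }
  replace (ly + Y) with (ly + A * 0 + Y) by ring.
  change (Rbar_le lx (ly + A * 0 + Y)).
  refine (is_lim_seq_le _ _ _ _ _ Hx Hbound); intro N; simpl.
  pose proof (INR_S_pos N) as HN.
  apply Rmult_le_reg_r with (INR (S N)); [exact HN |].
  unfold Rdiv; rewrite !Rmult_plus_distr_r, !Rmult_assoc, !Rinv_l by lra.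
  specialize (Hxy N); lra.
Qed.

Lemma is_lim_seq_avg_le_affine (x : nat -> R) (lx A Y : R) :
  is_lim_seq (fun N => x N / INR (S N)) lx ->
  (forall N, x N <= A + INR (S N) * Y) -> lx <= Y.
Proof.
  intros Hx Hxy. replace Y with (0 + Y) by ring.
  apply (is_lim_seq_avg_le x (fun _ => 0) lx 0 A Y Hx); [| intro N; specialize (Hxy N); lra].
  apply is_lim_seq_ext with (fun _ => 0); [intro; unfold Rdiv; ring | apply is_lim_seq_const].
Qed.

Lemma is_lim_seq_avg_ge_linear (x : nat -> R) (lx Y : R) :
  is_lim_seq (fun N => x N / INR (S N)) lx ->
  (forall N, INR (S N) * Y <= x N) -> Y <= lx.
Proof.
  intros Hx Hxy. replace lx with (lx + 0) by ring.
  apply (is_lim_seq_avg_le (fun N => INR (S N) * Y) x Y lx 0 0); auto.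
  - apply is_lim_seq_ext with (fun _ => Y); [| apply is_lim_seq_const].
    intro N; pose proof (INR_S_pos N); field; lra.
  - intro N; specialize (Hxy N); lra.
Qed.

Lemma is_lim_seq_incr_le (u : nat -> R) (l : R) :
  (forall n, u n <= u (S n)) -> is_lim_seq u l -> forall i, u i <= l.
Proof.
  intros Hu Hl i. change (Rbar_le (u i) l).
  apply (is_lim_seq_le_loc (fun _ => u i) u); [| apply is_lim_seq_const | exact Hl].
  exists i; intros n Hn; induction Hn; [lra | specialize (Hu m); lra].
Qed.

Lemma is_lim_seq_incr_cases (u : nat -> R) :
  (forall n, u n <= u (S n)) -> (forall n, 0 <= u n) ->
  (exists l : R, is_lim_seq u l) \/ is_lim_seq u p_infty.
Proof.
  intros Hu Hpos. pose proof (Lim_seq_correct u (ex_lim_seq_incr u Hu)) as Hl.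
  destruct (Lim_seq u) as [l | |] eqn:E; [left; now exists l | now right |].
  exfalso. apply (is_lim_seq_le (fun _ => 0) u 0 m_infty Hpos); [apply is_lim_seq_const | exact Hl].
Qed.

Lemma Glb_Rbar_spec_real (E : R -> Prop) (c0 m : R) :
  E c0 -> (forall c, E c -> m <= c) ->
  (forall c, E c -> real (Glb_Rbar E) <= c) /\
  (forall L, (forall c, E c -> L <= c) -> L <= real (Glb_Rbar E)).
Proof.
  intros Hc0 Hm. destruct (Glb_Rbar_correct E) as [Hlb Hglb].
  assert (Hge : Rbar_le m (Glb_Rbar E)) by (apply Hglb; intros c Hc; exact (Hm c Hc)).
  pose proof (Hlb c0 Hc0) as Hle.
  destruct (Glb_Rbar E) as [g | |]; simpl in *; try contradiction.
  split; [exact Hlb |].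
  intros L HL. exact (Hglb L HL).
Qed.

Fixpoint psum (f : nat -> R) (N : nat) : R :=
  match N with O => 0 | S n => psum f n + f (S n) end.

Lemma psum_le f g N :
  (forall i, (1 <= i <= N)%nat -> f i <= g i) -> psum f N <= psum g N.
Proof.
  induction N as [| N IH]; intros Hfg; simpl; [lra |].
  assert (psum f N <= psum g N) by (apply IH; intros i Hi; apply Hfg; lia).
  assert (f (S N) <= g (S N)) by (apply Hfg; lia).
  lra.
Qed.

Lemma psum_plus f g N : psum (fun i => f i + g i) N = psum f N + psum g N.
Proof. induction N as [| N IH]; simpl; [ring | rewrite IH; ring]. Qed.

Lemma psum_const c N : psum (fun _ => c) N = INR N * c.
Proof. induction N as [| N IH]; simpl psum; [simpl; ring | rewrite IH, S_INR; ring]. Qed.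

Lemma psum_initial_segment M X N : 0 <= X ->
  psum (fun i => if (i <? M)%nat then X else 0) N <= INR M * X.
Proof.
  intros HX.
  assert (E : psum (fun i => if (i <? M)%nat then X else 0) N = INR (Nat.min N (M - 1)) * X).
  { induction N as [| N IH]; simpl psum; [simpl; ring |]. rewrite IH.
    destruct (Nat.ltb_spec (S N) M).
    - replace (Nat.min (S N) (M - 1)) with (S N) by lia.
      replace (Nat.min N (M - 1)) with N by lia. rewrite S_INR; ring.
    - replace (Nat.min (S N) (M - 1)) with (M - 1)%nat by lia.
      replace (Nat.min N (M - 1)) with (M - 1)%nat by lia. ring. }
  rewrite E. apply Rmult_le_compat_r; [exact HX | apply le_INR; lia].
Qed.

Lemma psum_le_eventually f g M X Y N : 0 <= X ->
  (forall i, (1 <= i <= N)%nat -> f i <= g i + (if (i <? M)%nat then X else 0) + Y) ->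
  psum f N <= psum g N + INR M * X + INR N * Y.
Proof.
  intros HX Hfg.
  eapply Rle_trans; [apply (psum_le f (fun i => g i + (if (i <? M)%nat then X else 0) + Y) N Hfg) |].
  rewrite !psum_plus, psum_const.
  pose proof (psum_initial_segment M X N HX). lra.
Qed.

Lemma psum_incr d : (forall k, 0 <= d k) -> forall i, psum d i <= psum d (S i).
Proof. intros Hd i; simpl; specialize (Hd (S i)); lra. Qed.

Lemma psum_nonneg d : (forall k, 0 <= d k) -> forall i, 0 <= psum d i.
Proof. intros Hd i; induction i as [| i IH]; simpl; [lra | specialize (Hd (S i)); lra]. Qed.

Lemma inv_psum x0 d u i : inv x0 d u i = x0 + psum u i - psum d i.
Proof. induction i as [| i IH]; simpl; [ring | rewrite IH; ring]. Qed.

Definition admissible (N : nat) (u1 : R) (u : nat -> R) : Prop :=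
  u 1%nat = u1 /\ forall i, (2 <= i <= N)%nat -> 0 <= u i.

Lemma psum_admissible_ge N u1 u i :
  admissible N u1 u -> (1 <= i <= N)%nat -> u1 <= psum u i.
Proof.
  intros [U1 U2]. induction i as [| [| i] IH]; intros Hi; [lia | simpl; lra |].
  assert (u1 <= psum u (S i)) by (apply IH; lia).
  assert (0 <= u (S (S i))) by (apply U2; lia).
  simpl in *; lra.
Qed.

Lemma psum_single_order u1 i :
  (1 <= i)%nat -> psum (fun k => if (k =? 1)%nat then u1 else 0) i = u1.
Proof.
  intros Hi. induction i as [| [| i] IH]; [lia | simpl; ring |].
  simpl psum in *. rewrite IH by lia. simpl; ring.
Qed.

Lemma psum_two_orders a b i :
  psum (fun k => if (k =? 1)%nat then a else if (k =? 2)%nat then b else 0) (S (S i)) = a + b.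
Proof. induction i as [| i IH]; [simpl; ring | simpl psum in *; rewrite IH; simpl; ring]. Qed.

Lemma delta_bounds u : 0 <= delta u <= 1.
Proof. unfold delta; destruct (Rlt_dec 0 u); lra. Qed.

Lemma delta_pos u : 0 < u -> delta u = 1.
Proof. unfold delta; destruct (Rlt_dec 0 u); lra. Qed.

Lemma delta_0 : delta 0 = 0.
Proof. unfold delta; destruct (Rlt_dec 0 0); lra. Qed.

Lemma delta_le u v : 0 <= v <= u -> delta v <= delta u.
Proof. unfold delta; destruct (Rlt_dec 0 v), (Rlt_dec 0 u); lra. Qed.

Ltac destruct_Rmax :=
  unfold Rmax;
  repeat match goal with |- context [Rle_dec ?a ?b] => destruct (Rle_dec a b) end.

Lemma Rmax_pos_part_convex A B t : 0 <= t <= 1 ->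
  Rmax (t * A + (1 - t) * B) 0 <= t * Rmax A 0 + (1 - t) * Rmax B 0.
Proof. intros; destruct_Rmax; nra. Qed.

Section Hcost_facts.
Variables (h p : R).
Hypotheses (Hh : 0 <= h) (Hp : 0 <= p).

Lemma Hcost_nonneg x : 0 <= Hcost h p x.
Proof. unfold Hcost; destruct_Rmax; nra. Qed.

Lemma Hcost_of_nonneg x : 0 <= x -> Hcost h p x = h * x.
Proof. intros; unfold Hcost; destruct_Rmax; try lra; replace x with 0 by lra; ring. Qed.

Lemma Hcost_ge_pos_part c x : c <= x -> h * Rmax c 0 <= Hcost h p x.
Proof. intros; unfold Hcost; destruct_Rmax; nra. Qed.

Lemma Hcost_sub_le x e : 0 <= e -> Hcost h p (x - e) <= Hcost h p x + p * e.
Proof. intros; unfold Hcost; destruct_Rmax; nra. Qed.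

Lemma Hcost_Rmax_le x z : Hcost h p (Rmax x z) <= Hcost h p x + h * Rmax (z - x) 0.
Proof. unfold Hcost; destruct_Rmax; nra. Qed.

Lemma Hcost_Rmax_nonpos x z : z <= 0 -> Hcost h p (Rmax x z) <= Hcost h p x.
Proof. intros; unfold Hcost; destruct_Rmax; nra. Qed.

End Hcost_facts.

Section Optimal_costs.
Variables (h p K x0 : R) (d : nat -> R).
Hypotheses (Hh : 0 <= h) (Hp : 0 <= p) (HK : 0 <= K) (Hd : forall k, 0 <= d k).

Local Notation cost := (total_cost h p K x0 d).
Local Notation JN := (J_N h p K x0 d).

Definition stage_cost (u : nat -> R) (i : nat) : R :=
  Hcost h p (inv x0 d u i) + K * delta (u i).

Lemma stage_cost_nonneg u i : 0 <= stage_cost u i.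
Proof.
  unfold stage_cost. pose proof (Hcost_nonneg h p Hh Hp (inv x0 d u i)).
  pose proof (delta_bounds (u i)). nra.
Qed.

Lemma total_cost_psum u N : cost u N = psum (stage_cost u) N.
Proof. induction N as [| N IH]; simpl; [reflexivity | rewrite IH; reflexivity]. Qed.

Lemma J_N_spec N u1 :
  (forall u, admissible N u1 u -> JN N u1 <= cost u N) /\
  (forall L, (forall u, admissible N u1 u -> L <= cost u N) -> L <= JN N u1).
Proof.
  set (single := fun k => if (k =? 1)%nat then u1 else 0).
  assert (Hsingle : admissible N u1 single).
  { split; [reflexivity |]. intros i Hi; unfold single.
    destruct (Nat.eqb_spec i 1); [lia | lra]. }
  unfold J_N; match goal with |- context [Glb_Rbar ?E] =>
    destruct (Glb_Rbar_spec_real E (cost single N) 0) as [Hlb Hglb] end.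
  - exists single; destruct Hsingle as [? ?]; auto.
  - intros c [u [_ [_ ->]]]. rewrite total_cost_psum.
    replace 0 with (psum (fun _ => 0) N) by (rewrite psum_const; ring).
    apply psum_le; intros i _; apply stage_cost_nonneg.
  - split.
    + intros u [U1 U2]. apply Hlb. exists u; auto.
    + intros L HL. apply Hglb. intros c [u [U1 [U2 ->]]]. apply HL; split; auto.
Qed.

Lemma J_N_le N u1 u : admissible N u1 u -> JN N u1 <= cost u N.
Proof. apply (proj1 (J_N_spec N u1)). Qed.

Lemma J_N_ge N u1 L : (forall u, admissible N u1 u -> L <= cost u N) -> L <= JN N u1.
Proof. apply (proj2 (J_N_spec N u1)). Qed.

Lemma J_N_compare N a b C :
  (forall u, admissible N a u -> exists v, admissible N b v /\ cost v N <= cost u N + C) ->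
  JN N b <= JN N a + C.
Proof.
  intros Hcmp. cut (JN N b - C <= JN N a); [lra |].
  apply J_N_ge. intros u Hu. destruct (Hcmp u Hu) as [v [Hv Hle]].
  pose proof (J_N_le N b v Hv). lra.
Qed.

Lemma J_N_ge_bounded_demand N u1 D :
  (forall i, psum d i <= D) -> INR N * (h * Rmax (x0 + u1 - D) 0) <= JN N u1.
Proof.
  intros HD. apply J_N_ge. intros u Hu.
  rewrite total_cost_psum, <- psum_const. apply psum_le. intros i Hi.
  assert (Hlow : x0 + u1 - D <= inv x0 d u i).
  { rewrite inv_psum. pose proof (psum_admissible_ge N u1 u i Hu Hi). pose proof (HD i). lra. }
  pose proof (Hcost_ge_pos_part h p Hh Hp _ _ Hlow). pose proof (delta_bounds (u i)).
  unfold stage_cost. nra.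
Qed.

Definition top_up_policy (u1 D : R) (k : nat) : R :=
  if (k =? 1)%nat then u1 else if (k =? 2)%nat then Rmax (D - x0 - u1) 0 else 0.

Lemma inv_top_up_policy u1 D i :
  (2 <= i)%nat -> inv x0 d (top_up_policy u1 D) i = Rmax (x0 + u1) D - psum d i.
Proof.
  intros Hi. rewrite inv_psum.
  replace (Rmax (x0 + u1) D) with (x0 + (u1 + Rmax (D - x0 - u1) 0))
    by (destruct_Rmax; lra).
  destruct i as [| [| i]]; [lia | lia |].
  unfold top_up_policy; rewrite psum_two_orders; ring.
Qed.

Lemma J_N_le_bounded_demand N u1 D eps M :
  (forall i, psum d i <= D) -> (forall i, (M <= i)%nat -> D - eps <= psum d i) ->
  JN N u1 <= INR (M + 3) * (Hcost h p (x0 - d 1%nat + u1) + h * Rmax (x0 + u1) D + K)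
             + INR N * (h * (Rmax (x0 + u1 - D) 0 + eps)).
Proof.
  intros HD HM. set (w := top_up_policy u1 D).
  assert (Hw : admissible N u1 w).
  { split; [reflexivity |]. intros i Hi; unfold w, top_up_policy.
    destruct (Nat.eqb_spec i 1); [lia |].
    destruct (Nat.eqb_spec i 2); [apply Rmax_r | lra]. }
  assert (HD0 : 0 <= D) by exact (HD 0%nat).
  assert (Heps : 0 <= eps) by (pose proof (HD M); pose proof (HM M (le_n M)); lra).
  assert (Htail : 0 <= Rmax (x0 + u1 - D) 0) by apply Rmax_r.
  assert (Hhead : 0 <= h * Rmax (x0 + u1) D).
  { apply Rmult_le_pos; [exact Hh | pose proof (Rmax_r (x0 + u1) D); lra]. }
  pose proof (Hcost_nonneg h p Hh Hp (x0 - d 1%nat + u1)) as H1.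
  eapply Rle_trans; [apply (J_N_le N u1 w Hw) |].
  rewrite total_cost_psum.
  replace (INR (M + 3) * _) with (psum (fun _ => 0) N + INR (M + 3) *
     (Hcost h p (x0 - d 1%nat + u1) + h * Rmax (x0 + u1) D + K)) by (rewrite psum_const; ring).
  apply psum_le_eventually; [nra |].
  intros i Hi. unfold stage_cost.
  destruct i as [| [| i]]; [lia | |].
  - simpl inv. unfold w, top_up_policy; simpl.
    pose proof (delta_bounds u1). destruct (Nat.ltb_spec 1 (M + 3)); [nra | lia].
  - rewrite (inv_top_up_policy u1 D) by lia.
    pose proof (psum_nonneg d Hd (S (S i))). pose proof (HD (S (S i))).
    rewrite Hcost_of_nonneg by (pose proof (Rmax_r (x0 + u1) D); lra).
    destruct (Nat.ltb_spec (S (S i)) (M + 3)).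
    + pose proof (delta_bounds (w (S (S i)))). nra.
    + assert (Hw0 : w (S (S i)) = 0) by (unfold w, top_up_policy; destruct i; [lia | reflexivity]).
      rewrite Hw0, delta_0.
      pose proof (HM (S (S i)) ltac:(lia)).
      assert (Rmax (x0 + u1) D - D = Rmax (x0 + u1 - D) 0) by (destruct_Rmax; lra).
      nra.
Qed.

Lemma J_N_le_of_le N a b :
  0 < a -> a <= b -> JN N a <= JN N b + INR 3 * (p * (b - a) + K).
Proof.
  intros Ha Hab. apply J_N_compare. intros u [U1 U2].
  set (v := fun i => if (i =? 1)%nat then a
                     else if (i =? 2)%nat then u 2%nat + (b - a) else u i).
  assert (V1 : inv x0 d v 1 = inv x0 d u 1 - (b - a)) by (simpl; unfold v; simpl; lra).
  assert (V2 : forall j, inv x0 d v (S (S j)) = inv x0 d u (S (S j))).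
  { induction j as [| j IH].
    - change (inv x0 d v 1 - d 2%nat + v 2%nat = inv x0 d u 1 - d 2%nat + u 2%nat).
      rewrite V1; unfold v; simpl; ring.
    - change (inv x0 d v (S (S j)) - d (S (S (S j))) + v (S (S (S j))) =
              inv x0 d u (S (S j)) - d (S (S (S j))) + u (S (S (S j)))).
      rewrite IH; reflexivity. }
  exists v. split; [split; [reflexivity |] |].
  - intros i Hi. unfold v. destruct (Nat.eqb_spec i 1); [lia |].
    destruct (Nat.eqb_spec i 2); [subst; specialize (U2 2%nat Hi); lra | auto].
  - rewrite !total_cost_psum.
    replace (psum (stage_cost u) N + _) with
      (psum (stage_cost u) N + INR 3 * (p * (b - a) + K) + INR N * 0) by ring.
    apply psum_le_eventually; [nra |].
    intros i Hi. unfold stage_cost.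
    destruct i as [| [| [| i]]]; [lia | | |].
    + rewrite V1. pose proof (Hcost_sub_le h p Hh Hp (inv x0 d u 1) (b - a) ltac:(lra)).
      change (v 1%nat) with a; cbv [Nat.ltb Nat.leb].
      rewrite U1, !delta_pos by lra. lra.
    + rewrite V2. change (v 2%nat) with (u 2%nat + (b - a)); cbv [Nat.ltb Nat.leb].
      pose proof (delta_bounds (u 2%nat + (b - a))). pose proof (delta_bounds (u 2%nat)). nra.
    + rewrite V2. change (v (S (S (S i)))) with (u (S (S (S i)))); cbv [Nat.ltb Nat.leb]. lra.
Qed.

Definition max_policy (u w : nat -> R) (i : nat) : R :=
  match i with
  | O => 0
  | S j => Rmax (inv x0 d u (S j)) (inv x0 d w (S j))
           - Rmax (inv x0 d u j) (inv x0 d w j) + d (S j)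
  end.

Lemma inv_max_policy u w i :
  inv x0 d (max_policy u w) i = Rmax (inv x0 d u i) (inv x0 d w i).
Proof.
  induction i as [| i IH]; simpl; [destruct_Rmax; lra |].
  rewrite IH; ring.
Qed.

Lemma max_policy_1 u w : max_policy u w 1%nat = Rmax (u 1%nat) (w 1%nat).
Proof. simpl; destruct_Rmax; lra. Qed.

Lemma max_policy_bounds u w j :
  w (S j) = 0 -> 0 <= u (S j) -> 0 <= max_policy u w (S j) <= u (S j).
Proof. intros Hw Hu; simpl; rewrite Hw; destruct_Rmax; lra. Qed.

Lemma J_N_le_of_demand_exceeds N a b T :
  0 < a -> a <= b -> (forall i, (T <= i)%nat -> x0 + b <= psum d i) ->
  JN N b <= JN N a + INR T * (h * (b - a)).
Proof.
  intros Ha Hab HT. apply J_N_compare. intros u [U1 U2].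
  set (w := fun k => if (k =? 1)%nat then b else 0).
  set (v := max_policy u w).
  assert (V1 : v 1%nat = b) by (unfold v; rewrite max_policy_1, U1; apply Rmax_right; exact Hab).
  assert (Vi : forall j, (1 <= j)%nat -> 0 <= u (S j) -> 0 <= v (S j) <= u (S j)).
  { intros j Hj Hu. apply max_policy_bounds; [| exact Hu].
    unfold w; destruct (Nat.eqb_spec (S j) 1); [lia | reflexivity]. }
  exists v. split; [split; [exact V1 |] |].
  { intros [| j] Hi; [lia |]. apply Vi; [lia | apply U2; lia]. }
  rewrite !total_cost_psum.
  replace (psum (stage_cost u) N + _) with
    (psum (stage_cost u) N + INR T * (h * (b - a)) + INR N * 0) by ring.
  apply psum_le_eventually; [nra |].
  intros i Hi. unfold stage_cost. unfold v at 1; rewrite inv_max_policy.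
  assert (Hdelta : K * delta (v i) <= K * delta (u i)).
  { apply Rmult_le_compat_l; [exact HK |].
    destruct i as [| [| j]]; [lia | rewrite V1, U1, !delta_pos by lra; lra |].
    apply delta_le, Vi; [lia | apply U2; lia]. }
  assert (Hxw : inv x0 d w i = x0 + b - psum d i)
    by (rewrite inv_psum; unfold w; rewrite psum_single_order by lia; ring).
  assert (Hxu : x0 + a - psum d i <= inv x0 d u i).
  { rewrite inv_psum. pose proof (psum_admissible_ge N a u i (conj U1 U2) Hi). lra. }
  rewrite Hxw. destruct (Nat.ltb_spec i T) as [HiT | HiT].
  - pose proof (Hcost_Rmax_le h p Hh Hp (inv x0 d u i) (x0 + b - psum d i)).
    assert (h * Rmax (x0 + b - psum d i - inv x0 d u i) 0 <= h * (b - a))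
      by (apply Rmult_le_compat_l; [exact Hh | destruct_Rmax; lra]).
    lra.
  - pose proof (HT i HiT).
    pose proof (Hcost_Rmax_nonpos h p Hh Hp (inv x0 d u i) (x0 + b - psum d i) ltac:(lra)).
    lra.
Qed.

Lemma avg_J_N_bounded_demand (u D l : R) :
  0 < h -> is_lim_seq (psum d) D ->
  is_lim_seq (fun N => JN (S N) u / INR (S N)) l -> l = h * Rmax (x0 + u - D) 0.
Proof.
  intros Hhpos HD Hl.
  pose proof (is_lim_seq_incr_le _ _ (psum_incr d Hd) HD) as Hle.
  apply Rle_antisym.
  - apply Rle_plus_epsilon. intros e He.
    assert (Heh : 0 < e / h) by (apply Rdiv_lt_0_compat; lra).
    destruct (proj2 (is_lim_seq_spec _ _) HD (mkposreal _ Heh)) as [M HM].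
    replace (h * Rmax (x0 + u - D) 0 + e) with (h * (Rmax (x0 + u - D) 0 + e / h))
      by (field; lra).
    apply (is_lim_seq_avg_le_affine _ l
      (INR (M + 3) * (Hcost h p (x0 - d 1%nat + u) + h * Rmax (x0 + u) D + K)) _ Hl).
    intro N.
    apply (J_N_le_bounded_demand (S N) u D (e / h) M Hle).
    intros i Hi. specialize (HM i Hi); simpl in HM.
    apply Rabs_lt_between' in HM; lra.
  - apply (is_lim_seq_avg_ge_linear _ l _ Hl). intro N.
    apply J_N_ge_bounded_demand, Hle.
Qed.

Lemma avg_J_N_unbounded_demand (a b la lb : R) :
  is_lim_seq (psum d) p_infty -> 0 < a -> a <= b ->
  is_lim_seq (fun N => JN (S N) a / INR (S N)) la ->
  is_lim_seq (fun N => JN (S N) b / INR (S N)) lb -> la = lb.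
Proof.
  intros Hinf Ha Hab Hla Hlb.
  destruct (proj2 (is_lim_seq_spec _ _) Hinf (x0 + b)) as [T HT].
  apply Rle_antisym.
  - replace lb with (lb + 0) by ring.
    apply (is_lim_seq_avg_le _ _ la lb (INR 3 * (p * (b - a) + K)) 0 Hla Hlb).
    intro N. pose proof (J_N_le_of_le (S N) a b Ha Hab). lra.
  - replace la with (la + 0) by ring.
    apply (is_lim_seq_avg_le _ _ lb la (INR T * (h * (b - a))) 0 Hlb Hla).
    intro N. rewrite Rmult_0_r, Rplus_0_r.
    apply J_N_le_of_demand_exceeds; [exact Ha | exact Hab |].
    intros i Hi; specialize (HT i Hi); lra.
Qed.

End Optimal_costs.

Theorem theorem4 (h p K x0 : R) (d : nat -> R) (J : R -> R) :
  0 < h -> 0 < p -> 0 < K ->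
  (forall i : nat, 0 <= d i) ->
  (forall u1 : R, 0 < u1 ->
     is_lim_seq (fun N : nat => J_N h p K x0 d (S N) u1 / INR (S N)) (J u1)) ->
  forall a b t : R, 0 < a -> 0 < b -> 0 <= t <= 1 ->
    J (t * a + (1 - t) * b) <= t * J a + (1 - t) * J b.
Proof.
  intros Hh Hp HK Hd HJ a b t Ha Hb Ht.
  assert (Hm : 0 < t * a + (1 - t) * b) by nra.
  destruct (is_lim_seq_incr_cases (psum d) (psum_incr d Hd) (psum_nonneg d Hd))
    as [[D HD] | Hinf].
  - assert (HJD : forall u, 0 < u -> J u = h * Rmax (x0 + u - D) 0).
    { intros u Hu. apply (avg_J_N_bounded_demand h p K x0 d); auto; lra. }
    rewrite !HJD by assumption.
    replace (x0 + (t * a + (1 - t) * b) - D)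
      with (t * (x0 + a - D) + (1 - t) * (x0 + b - D)) by ring.
    pose proof (Rmax_pos_part_convex (x0 + a - D) (x0 + b - D) t Ht). nra.
  - assert (HJa : forall u, 0 < u -> J u = J a).
    { intros u Hu. destruct (Rle_lt_dec a u).
      - symmetry; apply (avg_J_N_unbounded_demand h p K x0 d) with (a := a) (b := u); auto; lra.
      - apply (avg_J_N_unbounded_demand h p K x0 d) with (a := u) (b := a); auto; lra. }
    rewrite (HJa _ Hm), (HJa b Hb). lra.
Qed.
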